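(* Let $\mathcal{G}$ be a tomographically local GPT and let $\hat{\xi}:\mathcal{G}\to\mathbf{QuasiSubStoch}$ be a quasiprobabilistic model of $\mathcal{G}$. Then for each system $A$ of $\mathcal{G}$ there is an invertible linear map $\chi_A:A\to\mathbb{R}^{\Lambda_A}$ (where $\hat\xi(A)=\mathbb{R}^{\Lambda_A}$) such that for every process $T:A\to B$ of $\mathcal{G}$, $$\hat{\xi}(T)=\chi_B\circ T\circ\chi_A^{-1},$$ and moreover $\mathbf{1}_{\Lambda_A}\circ\chi_A=u_A$, where $\mathbf{1}_{\Lambda_A}$ is the all-ones covector on $\mathbb{R}^{\Lambda_A}$ and $u_A$ is the deterministic effect of $A$.
   Context: A process theory consists of systems (closed under a composition $A\otimes B$, with a trivial system $I$) and processes $T:A\to B$, closed under sequential composition $\circ$ and parallel composition $\otimes$ and containing identities; processes $I\to A$ are states, $A\to I$ effects, $I\to I$ scalars. $\mathbf{RLinear}$ is the process theory of finite-dimensional real vector spaces (composite $=$ tensor product, trivial system $\mathbb{R}$) and linear maps. $\mathbf{QuasiSubStoch}$ is the sub-process theory of $\mathbf{RLinear}$ whose systems are the spaces $\mathbb{R}^\Lambda$ of real functions on finite sets $\Lambda$ (with $\mathbb{R}^{\Lambda}\otimes\mathbb{R}^{\Lambda'}=\mathbb{R}^{\Lambda\times\Lambda'}$ and trivial system $\mathbb{R}^{\{*\}}=\mathbb{R}$), and whose processes $\mathbb{R}^\Lambda\to\mathbb{R}^{\Lambda'}$ are linear maps given by real matrices $f(\lambda'|\lambda)$ (quasi-substochastic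 maps; no positivity is required). The all-ones covector $\mathbf{1}_\Lambda:\mathbb{R}^\Lambda\to\mathbb{R}$ is $v\mapsto\sum_{\lambda}v(\lambda)$. A tomographically local GPT is here a sub-process theory $\mathcal{G}$ of $\mathbf{RLinear}$ (closed under $\circ$, $\otimes$, containing identities) such that: each system $A$ is a finite-dimensional real vector space and composites are tensor products; the states of $A$ span $A$ and the effects on $A$ span $A^*$; every scalar lies in $[0,1]$; for each type the set of processes is closed under convex combinations; each system $A$ has a distinguished deterministic effect $u_A$ with $u_{A\otimes B}=u_A\otimes u_B$. A quasiprobabilistic model of $\mathcal{G}$ is a map $\hat\xi:\mathcal{G}\to\mathbf{QuasiSubStoch}$ that is diagram-preserving (it assigns to each system $A$ a space $\mathbb{R}^{\Lambda_A}$, with $\hat\xi(A\otimes B)=\mathbb{R}^{\Lambda_A}\otimes\mathbb{R}^{\Lambda_B}$ and $\hat\xi(I)=\mathbb{R}$, and to each process $T:A\to B$ a quasi-substochastic map $\hat\xi(T):\mathbb{R}^{\Lambda_A}\to\mathbb{R}^{\Lambda_B}$, preserving $\circ$, $\otimes$ and identities) and satisfies: (1) $\hat\xi(u_A)=\mathbf{1}_{\Lambda_A}$ for each system $A$; (2) $\hat\xi(s)=s$ for every scalar $s$ (empirical adequacy); (3) whenever a process $T$ is a convex combination $\sum_i\omega_iT_i$ of processes of the same type, $\hat\xi(T)=\sum_i\omega_i\hat\xi(T_i)$, and whenever an effect is a coarse-graining (sum) of effects, its image is the sum of their images. *)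

From HB Require Import structures.
From mathcomp Require Import all_boot all_order all_algebra.
From mathcomp Require Import mxtens.
From mathcomp Require Import reals.
Set Implicit Arguments.
Unset Strict Implicit.
Unset Printing Implicit Defensive.
Import Order.TTheory GRing.Theory Num.Theory.
Local Open Scope ring_scope.

(*  A linear map  V_A -> V_B  between the finite-dimensional spaces          *)
(*  V_A = R^(sdim A), V_B = R^(sdim B)  is a matrix  'M[R]_(sdim B, sdim A)     *)
(*  acting on column vectors; sequential composition  g o f  is  g *m f.    *)
(*  The tensor product R^m (x) R^n is identified with R^(m*n) through the    *)
(*  Kronecker product  tensmx  ( *t ) of mathcomp-real-closed's mxtens.     *)

Definition tcast (R : Type) (m n p q r s : nat)
  (em : m = (p * q)%N) (en : n = (r * s)%N) (M : 'M[R]_(p * q, r * s))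
  : 'M[R]_(m, n) := castmx (esym em, esym en) M.

(* Raw data of a sub-process theory of RLinear whose composites are tensor
   products (tomographic locality).                                          *)
Record GPTdata (R : realType) := {
  sys : Type;
  sdim : sys -> nat;
  tens : sys -> sys -> sys;
  Isys : sys;
  sdim_tens : forall A B, sdim (tens A B) = (sdim A * sdim B)%N;
  sdim_Isys : sdim Isys = 1%N;
  proc : forall A B, 'M[R]_(sdim B, sdim A) -> Prop;
  udet : forall A, 'M[R]_(sdim Isys, sdim A)
}.
Arguments proc {R} g {A B}.
Arguments sdim {R} g A.
Arguments tens {R} g A B.
Arguments Isys {R} g.
Arguments sys {R} g.
Arguments udet {R} g A.
Arguments sdim_tens {R} g A B.
Arguments sdim_Isys {R} g.

Section GPT.
Variables (R : realType) (G : GPTdata R).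

Definition ptens (A A' B B' : sys G)
  (f : 'M[R]_(sdim G B, sdim G A)) (g : 'M[R]_(sdim G B', sdim G A'))
  : 'M[R]_(sdim G (tens G B B'), sdim G (tens G A A')) :=
  tcast (sdim_tens G B B') (sdim_tens G A A') (f *t g).

Definition sdim_Isys2 : (sdim G (Isys G) * sdim G (Isys G))%N = 1%N :=
  congr2 muln (sdim_Isys G) (sdim_Isys G).

Definition is_TL_GPT : Prop :=
  (forall A, proc G (1%:M : 'M[R]_(sdim G A))) /\
  (forall A B C (f : 'M[R]_(sdim G B, sdim G A)) (g : 'M[R]_(sdim G C, sdim G B)),
      proc G f -> proc G g -> proc G (g *m f)) /\
  (forall A A' B B' (f : 'M[R]_(sdim G B, sdim G A))
          (g : 'M[R]_(sdim G B', sdim G A')),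
      proc G f -> proc G g -> proc G (ptens f g)) /\
  (forall A (v : 'M[R]_(sdim G A, sdim G (Isys G))),
      exists n (c : 'I_n -> R) (s : 'I_n -> 'M[R]_(sdim G A, sdim G (Isys G))),
        (forall i, proc G (s i)) /\ v = \sum_(i < n) c i *: s i) /\
  (forall A (v : 'M[R]_(sdim G (Isys G), sdim G A)),
      exists n (c : 'I_n -> R) (e : 'I_n -> 'M[R]_(sdim G (Isys G), sdim G A)),
        (forall i, proc G (e i)) /\ v = \sum_(i < n) c i *: e i) /\
  (forall (s : 'M[R]_(sdim G (Isys G), sdim G (Isys G))), proc G s ->
      forall i j, 0 <= s i j <= 1) /\
  (forall A B n (w : 'I_n -> R) (T : 'I_n -> 'M[R]_(sdim G B, sdim G A)),
      (forall i, 0 <= w i) -> \sum_(i < n) w i = 1 ->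
      (forall i, proc G (T i)) -> proc G (\sum_(i < n) w i *: T i)) /\
  (forall A, proc G (udet G A)) /\
  (forall A B,
      castmx (sdim_Isys G, sdim_tens G A B) (udet G (tens G A B))
      = castmx (sdim_Isys2, erefl (sdim G A * sdim G B)%N)
               (udet G A *t udet G B)).

(* Raw data of a diagram-preserving map  xi : G -> QuasiSubStoch.
   xi(A) = R^(Lambda_A) with Lambda_A = 'I_(lam A) (any finite set is in
   bijection with such an ordinal); xi(T) is an arbitrary real matrix. *)
Record QModeldata := {
  lam : sys G -> nat;
  lam_tens : forall A B, lam (tens G A B) = (lam A * lam B)%N;
  lam_Isys : lam (Isys G) = 1%N;
  xi : forall A B, 'M[R]_(sdim G B, sdim G A) -> 'M[R]_(lam B, lam A)
}.

Definition is_qmodel (X : QModeldata) : Prop :=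
  let xi := @xi X in
  (forall A, xi A A 1%:M = 1%:M) /\
  (forall A B C (f : 'M[R]_(sdim G B, sdim G A)) (g : 'M[R]_(sdim G C, sdim G B)),
      proc G f -> proc G g -> xi A C (g *m f) = xi B C g *m xi A B f) /\
  (forall A A' B B' (f : 'M[R]_(sdim G B, sdim G A))
          (g : 'M[R]_(sdim G B', sdim G A')),
      proc G f -> proc G g ->
      xi (tens G A A') (tens G B B') (ptens f g)
      = tcast (lam_tens X B B') (lam_tens X A A') (xi A B f *t xi A' B' g)) /\
  (forall A, xi A (Isys G) (udet G A) = const_mx 1) /\
  (forall (s : 'M[R]_(sdim G (Isys G), sdim G (Isys G))), proc G s ->
      castmx (lam_Isys X, lam_Isys X) (xi (Isys G) (Isys G) s)
      = castmx (sdim_Isys G, sdim_Isys G) s) /\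
  (forall A B n (w : 'I_n -> R) (T : 'I_n -> 'M[R]_(sdim G B, sdim G A)),
      (forall i, 0 <= w i) -> \sum_(i < n) w i = 1 ->
      (forall i, proc G (T i)) ->
      xi A B (\sum_(i < n) w i *: T i) = \sum_(i < n) w i *: xi A B (T i)) /\
  (forall A n (e : 'I_n -> 'M[R]_(sdim G (Isys G), sdim G A)),
      (forall i, proc G (e i)) -> proc G (\sum_(i < n) e i) ->
      xi A (Isys G) (\sum_(i < n) e i) = \sum_(i < n) xi A (Isys G) (e i)).

End GPT.
Arguments lam {R G} _ A.
Arguments xi {R G} _ {A B}.

From HB Require Import structures.
From mathcomp Require Import all_boot all_order all_algebra.
From mathcomp Require Import mxtens.
From mathcomp Require Import reals boolp.
From mathcomp Require Import ring.
Import Order.TTheory GRing.Theory Num.Theory.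
Local Open Scope ring_scope.
Set Implicit Arguments.
Unset Strict Implicit.
Unset Printing Implicit Defensive.

(* Since states and effects span, 1_A = sum_k c_k s_k e_k for real c_k, states s_k
   and effects e_k; put chi_A = sum_k c_k xi(s_k) e_k and chi_A^-1 = sum_k c_k s_k xi(e_k).
   Diagram preservation and empirical adequacy give xi(e) xi(T) xi(s) = e T s for every
   effect e, process T and state s, whence chi_B^-1 xi(T) chi_A = T and
   xi(u_A) chi_A = u_A.  The converse identity chi_A chi_A^-1 = sum_k c_k xi(s_k e_k) = 1
   asks xi to respect the real-linear relation sum_k c_k s_k e_k = 1_A.  Splitting the
   c_k by sign makes it an equality of nonnegative combinations of processes, which
   convex-linearity handles as soon as both sides carry the same total weight; the
   weights are balanced by padding with s u_A and s p u_A for a scalar p < 1, or, if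
   every scalar is 1, they are equal already, as composing with u_A and a state shows. *)

Lemma sum_scale_sign_split (R : realDomainType) (V : lmodType R) (T : Type)
    (r : seq T) (c : T -> R) (F : T -> V) (z : V) :
  \sum_(x <- r) c x *: F x = z <->
  z + \sum_(x <- r) Num.max (- c x) 0 *: F x = \sum_(x <- r) Num.max (c x) 0 *: F x.
Proof.
have -> : \sum_(x <- r) c x *: F x =
    \sum_(x <- r) Num.max (c x) 0 *: F x - \sum_(x <- r) Num.max (- c x) 0 *: F x.
  rewrite -sumrB; apply: eq_bigr => x _; rewrite -scalerBl; congr (_ *: _).
  have [c_ge0 | c_lt0] := leP 0 (c x).
    by rewrite max_r ?subr0 // oppr_le0.
  by rewrite max_l ?sub0r ?opprK // oppr_ge0 ltW.
by split=> [<- | <-]; rewrite ?subrK ?addrK.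
Qed.

Lemma castmx1_mulmx (R : pzRingType) m n k (em : m = k) (en : n = k) :
  castmx (esym em, esym en) (1%:M : 'M[R]_k) *m castmx (esym en, esym em) 1%:M = 1%:M.
Proof. by subst; rewrite !castmx_id mulmx1. Qed.

Lemma castmx1_mul_const (R : pzRingType) m n k p (em : m = k) (en : n = k) :
  castmx (esym em, esym en) (1%:M : 'M[R]_k) *m (const_mx 1 : 'M[R]_(n, p)) = const_mx 1.
Proof. by subst; rewrite castmx_id mul1mx. Qed.

Lemma castmx_eq_conj (R : pzRingType) m n k (em : m = k) (en : n = k)
    (a : 'M[R]_m) (b : 'M[R]_n) :
  castmx (em, em) a = castmx (en, en) b ->
  a = castmx (esym em, esym en) 1%:M *m b *m castmx (esym en, esym em) 1%:M.
Proof. by subst; rewrite !castmx_id => ->; rewrite mul1mx mulmx1. Qed.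

Lemma mx_dim1_scalar (R : pzRingType) n (e : n = 1%N) (t : 'M[R]_n) :
  t = (t (cast_ord (esym e) ord0) (cast_ord (esym e) ord0))%:M.
Proof. by subst; rewrite {1}[t]mx11_scalar !cast_ord_id. Qed.

Section ConicRelations.
Variables (R : realFieldType) (U V : lmodType R) (C : U -> Prop) (f : U -> V).

Hypothesis f_convex : forall n (w : 'I_n -> R) (x : 'I_n -> U),
  (forall i, 0 <= w i) -> \sum_i w i = 1 -> (forall i, C (x i)) ->
  f (\sum_i w i *: x i) = \sum_i w i *: f (x i).

Definition weight (l : seq (R * U)) := \sum_(x <- l) x.1.
Definition comb (l : seq (R * U)) := \sum_(x <- l) x.1 *: x.2.
Definition comb_image (l : seq (R * U)) := \sum_(x <- l) x.1 *: f x.2.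
Definition conic (l : seq (R * U)) := {in l, forall x, 0 <= x.1 /\ C x.2}.

Lemma comb_image_convex l : conic l -> weight l = 1 -> f (comb l) = comb_image l.
Proof.
move=> Cl l1; rewrite /comb /comb_image /weight in l1 *.
rewrite !(big_nth (0, 0)) !big_mkord in l1 *.
by apply: f_convex => // i; have [] := Cl _ (mem_nth (0, 0) (ltn_ord i)).
Qed.

Lemma conic_scale a l : 0 <= a -> conic l -> conic [seq (a * x.1, x.2) | x <- l].
Proof. by move=> a0 Cl _ /mapP[x /Cl[x0 Cx] ->]; split=> //; rewrite mulr_ge0. Qed.

Lemma comb_image_weight0 l : conic l -> weight l = 0 -> comb_image l = 0.
Proof.
move=> Cl /eqP; rewrite /weight big_seq psumr_eq0 => [/allP l0|x /Cl[] //].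
rewrite /comb_image big1_seq // => x /andP[_ xl].
by move: (l0 x xl); rewrite xl => /eqP ->; rewrite scale0r.
Qed.

Lemma comb_image_balanced l1 l2 : conic l1 -> conic l2 ->
  weight l1 = weight l2 -> comb l1 = comb l2 -> comb_image l1 = comb_image l2.
Proof.
move=> C1 C2 w12 c12; set w := weight l1 in w12.
have [w0 | w_neq0] := eqVneq w 0.
  by rewrite !comb_image_weight0 // -w12.
have w_gt0 : 0 < w.
  by rewrite lt_def w_neq0 /w /weight big_seq sumr_ge0 // => x /C1[].
have normalize l : conic l -> weight l = w ->
    comb_image l = w *: f (comb [seq (w^-1 * x.1, x.2) | x <- l]).
  move=> Cl wl; rewrite comb_image_convex; last 2 first.
  - by apply: conic_scale; rewrite // invr_ge0 ltW.
  - by rewrite /weight big_map -mulr_sumr -/(weight l) wl mulVf.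
  rewrite /comb_image big_map scaler_sumr; apply: eq_bigr => x _.
  by rewrite scalerA mulrA divff ?mul1r.
rewrite (normalize l1) // (normalize l2) //; congr (_ *: f _).
rewrite /comb !big_map; under eq_bigr do rewrite -scalerA.
by under [RHS]eq_bigr do rewrite -scalerA; rewrite -!scaler_sumr -/(comb l1) c12.
Qed.

Variables (p : R) (y0 y1 : U).
Hypotheses (p_ge0 : 0 <= p) (p_lt1 : p < 1) (C_y0 : C y0) (C_y1 : C y1).
Hypotheses (y1E : y1 = p *: y0) (f_y1 : f y1 = p *: f y0).

Lemma comb_image_padded l1 l2 : conic l1 -> conic l2 ->
  comb l1 = comb l2 -> comb_image l1 = comb_image l2.
Proof.
move=> C1 C2 c12.
wlog w12 : l1 l2 C1 C2 c12 / weight l1 <= weight l2.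
  move=> IH; have [|/ltW w21] := leP (weight l1) (weight l2); first exact: IH.
  by symmetry; apply: IH.
pose d := (weight l2 - weight l1) / (1 - p).
have d_ge0 : 0 <= d by apply: divr_ge0; rewrite subr_ge0 // ltW.
have Cd1 : conic ((d, y1) :: l1).
  by move=> x; rewrite inE => /predU1P[-> | /C1].
have Cd2 : conic ((d * p, y0) :: l2).
  by move=> x; rewrite inE => /predU1P[-> | /C2] //; rewrite mulr_ge0.
(* adding d y1 = d p y0 to both sides equalizes the weights *)
apply: (addrI ((d * p) *: f y0)).
rewrite -[in LHS]scalerA -f_y1.
have := comb_image_balanced Cd1 Cd2; rewrite /comb_image !big_cons /=; apply.
- rewrite /weight !big_cons /= -/(weight l1) -/(weight l2) /d; field.
  by rewrite subr_eq0 eq_sym lt_eqF.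
- by rewrite /comb !big_cons /= -/(comb l1) c12 y1E scalerA.
Qed.

End ConicRelations.

Section QuasiprobabilisticModel.
Variables (R : realType) (G : GPTdata R) (X : QModeldata G).
Hypotheses (HG : is_TL_GPT G) (HX : is_qmodel X).

Local Notation dI := (sdim G (Isys G)).
Local Notation lI := (lam X (Isys G)).

Lemma proc_id A : proc G (1%:M : 'M[R]_(sdim G A)).
Proof. by case: HG. Qed.

Lemma proc_comp A B C (f : 'M[R]_(sdim G B, sdim G A)) (g : 'M[R]_(sdim G C, sdim G B)) :
  proc G f -> proc G g -> proc G (g *m f).
Proof. by case: HG => _ [+ _]; apply. Qed.

Lemma states_span A (v : 'M[R]_(sdim G A, dI)) :
  exists n (c : 'I_n -> R) (s : 'I_n -> 'M[R]_(sdim G A, dI)),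
    (forall i, proc G (s i)) /\ v = \sum_(i < n) c i *: s i.
Proof. by case: HG => _ [_ [_ [+ _]]]; apply. Qed.

Lemma effects_span A (v : 'M[R]_(dI, sdim G A)) :
  exists n (c : 'I_n -> R) (e : 'I_n -> 'M[R]_(dI, sdim G A)),
    (forall i, proc G (e i)) /\ v = \sum_(i < n) c i *: e i.
Proof. by case: HG => _ [_ [_ [_ [+ _]]]]; apply. Qed.

Lemma scalar_proc_01 (t : 'M[R]_dI) : proc G t -> forall i j, 0 <= t i j <= 1.
Proof. by case: HG => _ [_ [_ [_ [_ [+ _]]]]]; apply. Qed.

Lemma proc_udet A : proc G (udet G A).
Proof. by case: HG => _ [_ [_ [_ [_ [_ [_ [+ _]]]]]]]; apply. Qed.

Lemma xi_id A : xi X (1%:M : 'M[R]_(sdim G A)) = 1%:M.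
Proof. by case: HX. Qed.

Lemma xi_comp A B C (f : 'M[R]_(sdim G B, sdim G A)) (g : 'M[R]_(sdim G C, sdim G B)) :
  proc G f -> proc G g -> xi X (g *m f) = xi X g *m xi X f.
Proof. by case: HX => _ [+ _]; apply. Qed.

Lemma xi_udet A : xi X (udet G A) = const_mx 1.
Proof. by case: HX => _ [_ [_ [+ _]]]; apply. Qed.

Lemma xi_scalar_cast (t : 'M[R]_dI) : proc G t ->
  castmx (lam_Isys X, lam_Isys X) (xi X t) = castmx (sdim_Isys G, sdim_Isys G) t.
Proof. by case: HX => _ [_ [_ [_ [+ _]]]]; apply. Qed.

Lemma xi_convex A B n (w : 'I_n -> R) (T : 'I_n -> 'M[R]_(sdim G B, sdim G A)) :
  (forall i, 0 <= w i) -> \sum_(i < n) w i = 1 -> (forall i, proc G (T i)) ->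
  xi X (\sum_(i < n) w i *: T i) = \sum_(i < n) w i *: xi X (T i).
Proof. by case: HX => _ [_ [_ [_ [_ [+ _]]]]]; apply. Qed.

Lemma xi_coarse_grain A n (e : 'I_n -> 'M[R]_(dI, sdim G A)) :
  (forall i, proc G (e i)) -> proc G (\sum_(i < n) e i) ->
  xi X (\sum_(i < n) e i) = \sum_(i < n) xi X (e i).
Proof. by case: HX => _ [_ [_ [_ [_ [_ +]]]]]; apply. Qed.

Definition scalar_iso : 'M[R]_(lI, dI) :=
  castmx (esym (lam_Isys X), esym (sdim_Isys G)) 1%:M.
Definition scalar_iso_inv : 'M[R]_(dI, lI) :=
  castmx (esym (sdim_Isys G), esym (lam_Isys X)) 1%:M.

Lemma scalar_isoK : scalar_iso *m scalar_iso_inv = 1%:M.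
Proof. exact: castmx1_mulmx. Qed.

Lemma scalar_iso_invK : scalar_iso_inv *m scalar_iso = 1%:M.
Proof. exact: castmx1_mulmx. Qed.

Lemma xi_scalar (t : 'M[R]_dI) : proc G t -> xi X t = scalar_iso *m t *m scalar_iso_inv.
Proof. by move=> t_proc; apply: castmx_eq_conj; exact: xi_scalar_cast. Qed.

Lemma xi_scalar_mx (p : R) : proc G (p%:M : 'M[R]_dI) -> xi X (p%:M : 'M[R]_dI) = p%:M.
Proof.
by move=> p_proc; rewrite xi_scalar // mul_mx_scalar -scalemxAl scalar_isoK scalemx1.
Qed.

Definition xi_state A (s : 'M[R]_(sdim G A, dI)) : 'M[R]_(lam X A, dI) :=
  xi X s *m scalar_iso.
Definition xi_effect A (e : 'M[R]_(dI, sdim G A)) : 'M[R]_(dI, lam X A) :=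
  scalar_iso_inv *m xi X e.

Lemma xi_state_effect A (s : 'M[R]_(sdim G A, dI)) (e : 'M[R]_(dI, sdim G A)) :
  proc G s -> proc G e -> xi_state s *m xi_effect e = xi X (s *m e).
Proof.
by move=> s_proc e_proc; rewrite xi_comp // mulmxA -(mulmxA _ scalar_iso) scalar_isoK mulmx1.
Qed.

Lemma xi_effect_proc_state A B (e : 'M[R]_(dI, sdim G B)) (T : 'M[R]_(sdim G B, sdim G A))
    (s : 'M[R]_(sdim G A, dI)) :
  proc G e -> proc G T -> proc G s -> xi_effect e *m xi X T *m xi_state s = e *m T *m s.
Proof.
move=> e_proc T_proc s_proc; have eT_proc := proc_comp T_proc e_proc.
rewrite /xi_effect /xi_state !mulmxA -(mulmxA _ (xi X e)) -xi_comp //.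
rewrite -(mulmxA _ (xi X (e *m T))) -xi_comp // xi_scalar; last exact: proc_comp.
by rewrite !mulmxA scalar_iso_invK mul1mx -mulmxA scalar_iso_invK mulmx1.
Qed.

Lemma xi_effect_state A (e : 'M[R]_(dI, sdim G A)) (s : 'M[R]_(sdim G A, dI)) :
  proc G e -> proc G s -> xi_effect e *m xi_state s = e *m s.
Proof.
move=> e_proc s_proc.
by have := xi_effect_proc_state e_proc (proc_id A) s_proc; rewrite xi_id !mulmx1.
Qed.

Lemma xi_effect_udet A : xi_effect (udet G A) = const_mx 1.
Proof. by rewrite /xi_effect xi_udet castmx1_mul_const. Qed.

Definition scalar_i0 : 'I_dI := cast_ord (esym (sdim_Isys G)) ord0.

Lemma scalars_trivial_or_proper :
  (forall t : 'M[R]_dI, proc G t -> t = 1%:M) \/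
  exists2 p : R, 0 <= p < 1 & proc G (p%:M : 'M[R]_dI).
Proof.
have [[t [t_proc t_neq1]] | all1] := EM (exists t : 'M[R]_dI, proc G t /\ t <> 1%:M).
  right; exists (t scalar_i0 scalar_i0); last by rewrite -mx_dim1_scalar.
  have /andP[-> t_le1] := scalar_proc_01 t_proc scalar_i0 scalar_i0.
  rewrite lt_neqAle t_le1 andbT; apply: contra_notN t_neq1 => /eqP t1.
  by rewrite (mx_dim1_scalar (sdim_Isys G) t) t1.
by left=> t t_proc; apply: contrapT => t_neq1; apply: all1; exists t.
Qed.

Lemma lam_eq0 A : sdim G A = 0%N -> lam X A = 0%N.
Proof.
move=> dimA0.
have u0 : udet G A = \sum_(i < 0) (0 : 'M[R]_(dI, sdim G A)).
  apply/matrixP => i [j j_lt]; suff : (j < 0)%N by []; by rewrite -dimA0.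
have u_proc : proc G (\sum_(i < 0) (0 : 'M[R]_(dI, sdim G A))).
  by rewrite -u0; exact: proc_udet.
have := xi_udet A; rewrite u0 xi_coarse_grain // ?big_ord0; last by case.
have [// | lamA_gt0] := posnP (lam X A).
move/matrixP/(_ (cast_ord (esym (lam_Isys X)) ord0) (Ordinal lamA_gt0)).
by rewrite !mxE => /eqP; rewrite eq_sym oner_eq0.
Qed.

Lemma state_exists A : (0 < sdim G A)%N -> exists s : 'M[R]_(sdim G A, dI), proc G s.
Proof.
move=> dimA_gt0.
have [n [c [s [s_proc sE]]]] := states_span (delta_mx (Ordinal dimA_gt0) scalar_i0).
case: n c s s_proc sE => [|n] c s s_proc sE; last by exists (s ord0).
move/matrixP: sE => /(_ (Ordinal dimA_gt0) scalar_i0).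
by rewrite big_ord0 !mxE !eqxx => /eqP; rewrite oner_eq0.
Qed.

Lemma weight_trivial_scalars A B (s : 'M[R]_(sdim G A, dI))
    (l : seq (R * 'M[R]_(sdim G B, sdim G A))) :
  (forall t : 'M[R]_dI, proc G t -> t = 1%:M) -> proc G s -> conic (proc G) l ->
  udet G B *m comb l *m s = weight l *: 1%:M.
Proof.
move=> trivial s_proc Cl; rewrite mulmx_sumr mulmx_suml scaler_suml.
apply: eq_big_seq => x /Cl[_ x_proc].
rewrite -scalemxAr -scalemxAl (trivial (udet G B *m x.2 *m s)) //.
by apply: proc_comp (proc_comp _ _) => //; exact: proc_udet.
Qed.

Lemma xi_conic_relation A B (sA : 'M[R]_(sdim G A, dI)) (sB : 'M[R]_(sdim G B, dI))
    (l1 l2 : seq (R * 'M[R]_(sdim G B, sdim G A))) :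
  proc G sA -> proc G sB -> conic (proc G) l1 -> conic (proc G) l2 ->
  comb l1 = comb l2 -> comb_image (xi X) l1 = comb_image (xi X) l2.
Proof.
move=> sA_proc sB_proc C1 C2 c12.
have [trivial | [p /andP[p_ge0 p_lt1] p_proc]] := scalars_trivial_or_proper.
  apply: (comb_image_balanced (@xi_convex A B)) => //.
  have := congr1 (fun M => udet G B *m M *m sA) c12.
  rewrite /= !weight_trivial_scalars // => /matrixP/(_ scalar_i0 scalar_i0).
  by rewrite !mxE eqxx !mulr1.
have uA_proc := proc_udet A.
have sBp_proc : proc G (sB *m p%:M) by exact: proc_comp.
apply: (comb_image_padded (@xi_convex A B) p_ge0 p_lt1
          (y0 := sB *m udet G A) (y1 := sB *m p%:M *m udet G A)) => //.
- exact: proc_comp.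
- exact: proc_comp.
- by rewrite mul_mx_scalar -scalemxAl.
- by rewrite !xi_comp // xi_scalar_mx // mul_mx_scalar -scalemxAl.
Qed.

Local Notation rank_one_terms A :=
  (seq (R * ('M[R]_(sdim G A, dI) * 'M[R]_(dI, sdim G A)))).

Definition rank_one_decomposition A (D : rank_one_terms A) (M : 'M[R]_(sdim G A)) :=
  {in D, forall x, proc G x.2.1 /\ proc G x.2.2} /\
  \sum_(x <- D) x.1 *: (x.2.1 *m x.2.2) = M.

Lemma id_decomposition_exists A : exists D : rank_one_terms A, rank_one_decomposition D 1%:M.
Proof.
rewrite mx1_sum_delta; under eq_bigr do rewrite -(mul_delta_mx scalar_i0).
apply: (big_ind (fun M => exists D, rank_one_decomposition D M)).
- by exists [::]; rewrite /rank_one_decomposition big_nil.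
- move=> _ _ [D1 [D1_proc <-]] [D2 [D2_proc <-]].
  exists (D1 ++ D2); split; last by rewrite big_cat.
  by move=> x; rewrite mem_cat => /orP[/D1_proc | /D2_proc].
move=> i _.
have [n [c [s [s_proc ->]]]] := states_span (delta_mx i scalar_i0 : 'M[R]_(sdim G A, dI)).
have [m [b [e [e_proc ->]]]] := effects_span (delta_mx scalar_i0 i : 'M[R]_(dI, sdim G A)).
exists [seq (c k * b j, (s k, e j)) | k <- index_enum 'I_n, j <- index_enum 'I_m]; split.
  by move=> x /allpairsP[[k j] [_ _ ->]]; split; [exact: s_proc | exact: e_proc].
rewrite big_allpairs_dep /= mulmx_suml; apply: eq_bigr => k _.
rewrite mulmx_sumr; apply: eq_bigr => j _.
by rewrite -scalemxAl -scalemxAr scalerA.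
Qed.

Lemma xi_id_decomposition A (D : rank_one_terms A) : rank_one_decomposition D 1%:M ->
  \sum_(x <- D) x.1 *: xi X (x.2.1 *m x.2.2) = 1%:M.
Proof.
move=> [D_proc D1].
have [dimA0 | dimA_gt0] := posnP (sdim G A).
  by apply/matrixP => i; have := ltn_ord i; rewrite [X in (_ < X)%N]lam_eq0.
have [s0 s0_proc] := state_exists dimA_gt0.
have se_proc : {in D, forall x, proc G (x.2.1 *m x.2.2)}.
  by move=> x /D_proc[s_proc e_proc]; exact: proc_comp.
pose l_neg := (1, 1%:M) :: [seq (Num.max (- x.1) 0, x.2.1 *m x.2.2) | x <- D].
pose l_pos := [seq (Num.max x.1 0, x.2.1 *m x.2.2) | x <- D].
have C_neg : conic (proc G) l_neg.
  move=> y; rewrite inE => /predU1P[-> | /mapP[x xD ->]]; first by split; last exact: proc_id.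
  by split; [rewrite le_max lexx orbT | exact: se_proc].
have C_pos : conic (proc G) l_pos.
  by move=> y /mapP[x xD ->]; split; [rewrite le_max lexx orbT | exact: se_proc].
rewrite -(xi_id A); apply/sum_scale_sign_split.
have := xi_conic_relation s0_proc s0_proc C_neg C_pos.
rewrite /comb_image big_cons !big_map scale1r; apply.
by rewrite /comb big_cons !big_map scale1r; apply/sum_scale_sign_split.
Qed.

Definition id_decomp A := proj1_sig (cid (id_decomposition_exists A)).

Lemma id_decompP A : rank_one_decomposition (id_decomp A) 1%:M.
Proof. by rewrite /id_decomp; case: cid. Qed.

Definition chi A : 'M[R]_(lam X A, sdim G A) :=
  \sum_(x <- id_decomp A) x.1 *: (xi_state x.2.1 *m x.2.2).
Definition chi_inv A : 'M[R]_(sdim G A, lam X A) :=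
  \sum_(x <- id_decomp A) x.1 *: (x.2.1 *m xi_effect x.2.2).

Lemma xi_effect_proc_chi A B (e : 'M[R]_(dI, sdim G B)) (T : 'M[R]_(sdim G B, sdim G A)) :
  proc G e -> proc G T -> xi_effect e *m xi X T *m chi A = e *m T.
Proof.
move=> e_proc T_proc; have [D_proc D1] := id_decompP A.
rewrite /chi -[RHS]mulmx1 -D1 !mulmx_sumr; apply: eq_big_seq => x /D_proc[s_proc _].
by rewrite -!scalemxAr mulmxA xi_effect_proc_state // mulmxA.
Qed.

Lemma chi_inv_xi_chi A B (T : 'M[R]_(sdim G B, sdim G A)) :
  proc G T -> chi_inv B *m xi X T *m chi A = T.
Proof.
move=> T_proc; have [D_proc D1] := id_decompP B.
rewrite /chi_inv -[RHS]mul1mx -D1 !mulmx_suml; apply: eq_big_seq => x /D_proc[_ e_proc].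
by rewrite -!scalemxAl -(mulmxA x.2.1 _ (xi X T)) -(mulmxA x.2.1) xi_effect_proc_chi // mulmxA.
Qed.

Lemma chi_inv_chi A : chi_inv A *m chi A = 1%:M.
Proof. by have := chi_inv_xi_chi (proc_id A); rewrite xi_id mulmx1. Qed.

Lemma xi_effect_chi A (e : 'M[R]_(dI, sdim G A)) : proc G e -> xi_effect e *m chi A = e.
Proof.
by move=> e_proc; have := xi_effect_proc_chi e_proc (proc_id A); rewrite xi_id !mulmx1.
Qed.

Lemma effect_chi_inv A (e : 'M[R]_(dI, sdim G A)) : proc G e -> e *m chi_inv A = xi_effect e.
Proof.
move=> e_proc; have [D_proc _] := id_decompP A.
rewrite -[RHS]mulmx1 -(xi_id_decomposition (id_decompP A)) /chi_inv !mulmx_sumr.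
apply: eq_big_seq => x /D_proc[s_proc e'_proc].
rewrite -!scalemxAr -xi_state_effect // (mulmxA e) (mulmxA (xi_effect e)).
by rewrite xi_effect_state.
Qed.

Lemma chi_chi_inv A : chi A *m chi_inv A = 1%:M.
Proof.
have [D_proc _] := id_decompP A.
rewrite -(xi_id_decomposition (id_decompP A)) /chi mulmx_suml.
apply: eq_big_seq => x /D_proc[s_proc e_proc].
by rewrite -scalemxAl -mulmxA effect_chi_inv // xi_state_effect.
Qed.

Lemma xi_chi_conj A B (T : 'M[R]_(sdim G B, sdim G A)) :
  proc G T -> xi X T = chi B *m T *m chi_inv A.
Proof.
move=> T_proc; rewrite -[in RHS](chi_inv_xi_chi T_proc) !mulmxA chi_chi_inv mul1mx.
by rewrite -mulmxA chi_chi_inv mulmx1.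
Qed.

Lemma const_chi A : (const_mx 1 : 'M[R]_(dI, lam X A)) *m chi A = udet G A.
Proof. by rewrite -xi_effect_udet xi_effect_chi //; exact: proc_udet. Qed.

End QuasiprobabilisticModel.

Theorem proposition2 (R : realType) (G : GPTdata R) (X : QModeldata G) :
  is_TL_GPT G -> is_qmodel X ->
  exists (chi : forall A : sys G, 'M[R]_(lam X A, sdim G A))
         (chiinv : forall A : sys G, 'M[R]_(sdim G A, lam X A)),
    (forall A, chi A *m chiinv A = 1%:M /\ chiinv A *m chi A = 1%:M) /\
    (forall (A B : sys G) (T : 'M[R]_(sdim G B, sdim G A)),
        proc G T -> xi X T = chi B *m T *m chiinv A) /\
    (forall A, (const_mx 1 : 'M[R]_(sdim G (Isys G), lam X A)) *m chi A
               = udet G A).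
Proof.
move=> HG HX; exists (chi X HG), (chi_inv X HG); split; [|split].
- by move=> A; rewrite chi_chi_inv ?chi_inv_chi.
- by move=> A B T; exact: xi_chi_conj.
- exact: const_chi.
Qed.
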